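(* Let $d_{in}, d_{out}, d_{\rm key}, k, m$ be positive integers, let $\mathbf W_q, \mathbf W_{\rm key} \in \mathbb R^{d_{in}\times d_{\rm key}}$ and $\mathbf W_v \in \mathbb R^{d_{in}\times d_{out}}$, and let $\sigma_q, \sigma_{\rm key}, \sigma_v$ denote the largest singular values of $\mathbf W_q, \mathbf W_{\rm key}, \mathbf W_v$ respectively. Let $\mathbf X_0 \in \mathbb R^{m\times d_{in}}$ (imposed state) with rows $(\mathbf X_0)^1,\dots,(\mathbf X_0)^m$, let $M_x := \max_j \|(\mathbf X_0)^j\|$, let $M_u>0$, and let $\mathbf Y^* \in \mathbb R^{m\times d_{out}}$ (desired output) with rows $\mathbf Y^{*1},\dots,\mathbf Y^{*m}$. Define $$\alpha := \frac{\sigma_q\sigma_{\rm key}M_uM_x}{\sqrt{d_{\rm key}}},\qquad g_i := \sum_{j=1}^m \exp\!\Big(\frac{(\mathbf X_0)^i\mathbf W_q\mathbf W_{\rm key}^\top (\mathbf X_0)^{j\top}}{\sqrt{d_{\rm key}}}\Big),\qquad \gamma_i := \frac{e^{\alpha}}{g_i}\,\sigma_v M_u .$$ Let $\mathbf Y_x^{\max} := \Xi(\mathbf X_0;\boldsymbol\theta)\in\mathbb R^{m\times d_{out}}$, and for each $i$ let $\mathbf Y^{\max,i}_{x,\perp}$ denote the orthogonal projection of the $i$-th row of $\mathbf Y_x^{\max}$ onto the orthogonal complement (in $\mathbb R^{d_{out}}$) of $\operatorname{span}(\mathbf Y^{*i})$. Suppose that for some $i\in\{1,\dots,m\}$, $$\|\mathbf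 Y^{\max,i}_{x,\perp}\| > k\,\gamma_i .$$ Then for every control input $\mathbf U\in\mathbb R^{k\times d_{in}}$ whose rows satisfy $\|\mathbf U^j\|\le M_u$ for all $j=1,\dots,k$, the output $\mathbf Y$ (the last $m$ rows of $\Xi([\mathbf U;\mathbf X_0];\boldsymbol\theta)$) satisfies $\mathbf Y\neq \mathbf Y^*$; i.e., $\mathbf Y^*$ is unreachable with $k$ control tokens of norm at most $M_u$.
   Context: Self-attention with parameters $\boldsymbol\theta=(\mathbf W_q,\mathbf W_{\rm key},\mathbf W_v)$ is the map $\Xi(\cdot;\boldsymbol\theta):\mathbb R^{N\times d_{in}}\to\mathbb R^{N\times d_{out}}$ (for any $N$) given by $\Xi(\mathbf X;\boldsymbol\theta)=\mathbf D^{-1}\exp\!\big(\mathbf Q\mathbf K^\top/\sqrt{d_{\rm key}}\big)\mathbf V$, where $\mathbf Q=\mathbf X\mathbf W_q$, $\mathbf K=\mathbf X\mathbf W_{\rm key}$, $\mathbf V=\mathbf X\mathbf W_v$, $\exp$ is applied entrywise, and $\mathbf D=\operatorname{diag}\big(\exp(\mathbf Q\mathbf K^\top/\sqrt{d_{\rm key}})\mathbf 1_{N\times1}\big)$ (i.e., row-wise softmax attention, no masking). For $\mathbf U\in\mathbb R^{k\times d_{in}}$ and $\mathbf X_0\in\mathbb R^{m\times d_{in}}$, $[\mathbf U;\mathbf X_0]\in\mathbb R^{(k+m)\times d_{in}}$ denotes vertical concatenation (rows of $\mathbf U$ first), and the output $\Xi([\mathbf U;\mathbf X_0];\boldsymbol\theta)$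 is partitioned as $[\mathbf U';\mathbf Y]$ with $\mathbf U'\in\mathbb R^{k\times d_{out}}$, $\mathbf Y\in\mathbb R^{m\times d_{out}}$. Rows of matrices are indexed by superscripts; norms of rows are Euclidean. *)

From HB Require Import structures.
From mathcomp Require Import all_boot all_order all_algebra.
From mathcomp Require Import all_classical all_reals all_analysis.
Set Implicit Arguments. Unset Strict Implicit. Unset Printing Implicit Defensive.
Import Order.TTheory GRing.Theory Num.Theory.
Local Open Scope ring_scope.
Local Open Scope classical_set_scope.

Section Defs.
Variable R : realType.

Definition rnorm (n : nat) (v : 'rV[R]_n) : R :=
  Num.sqrt (\sum_(j < n) v 0 j ^+ 2).

Definition sigma_max (a b : nat) (W : 'M[R]_(a, b)) : R :=
  Num.sqrt (sup [set x : R | eigenvalue (W^T *m W) x]).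

Definition attn (N din dout dkey : nat) (Wq Wk : 'M[R]_(din, dkey))
    (Wv : 'M[R]_(din, dout)) (X : 'M[R]_(N, din)) : 'M[R]_(N, dout) :=
  let Q := X *m Wq in
  let K := X *m Wk in
  let V := X *m Wv in
  let E := map_mx expR ((Num.sqrt (dkey%:R))^-1 *: (Q *m K^T)) in
  let D := diag_mx (\row_(i < N) \sum_(l < N) E i l) in
  invmx D *m E *m V.

Definition proj_perp (n : nat) (v y : 'rV[R]_n) : 'rV[R]_n :=
  if y == 0 then v
  else v - ((v *m y^T) 0 0 / (y *m y^T) 0 0) *: y.

End Defs.

(* Write the i-th row of the output as a mixture: with c_j the softmax scores of the control
   tokens against the imposed token X0^i,
     Y^i = (sum_j c_j + g_i)^-1 (sum_j c_j U^j W_v + g_i Ymax^i).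
   Projecting onto span(Y^i)^perp annihilates the left-hand side, so
   g_i |proj_perp Ymax^i| = |proj_perp (sum_j c_j U^j W_v)| <= sum_j c_j |U^j W_v|.
   Cauchy-Schwarz and |x W| <= sigma(W) |x| give c_j <= e^alpha and |U^j W_v| <= sigma_v M_u,
   so g_i |proj_perp Ymax^i| <= k e^alpha sigma_v M_u = g_i k gamma_i, contradicting the hypothesis.
   The operator-norm bound |x W| <= sigma(W) |x| comes from the spectral theorem for W^T W. *)
From HB Require Import structures.
From mathcomp Require Import all_boot all_order all_algebra.
From mathcomp Require Import all_classical all_reals all_analysis.
From mathcomp Require Import ring lra.
From mathcomp Require Import complex.
Import Order.TTheory GRing.Theory Num.Theory.
Local Open Scope ring_scope.

Set Implicit Arguments. Unset Strict Implicit. Unset Printing Implicit Defensive.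

Section EuclideanRow.
Variable R : realType.

Definition dot n (u v : 'rV[R]_n) : R := (u *m v^T) 0 0.

Lemma dotE n (u v : 'rV[R]_n) : dot u v = \sum_j u 0 j * v 0 j.
Proof. by rewrite /dot mxE; apply: eq_bigr => j _; rewrite mxE. Qed.

Lemma dotC n (u v : 'rV[R]_n) : dot u v = dot v u.
Proof. by rewrite !dotE; apply: eq_bigr => j _; rewrite mulrC. Qed.

Lemma dotDl n (u w v : 'rV[R]_n) : dot (u + w) v = dot u v + dot w v.
Proof. by rewrite !dotE -big_split; apply: eq_bigr => j _; rewrite mxE mulrDl. Qed.

Lemma dotZl n a (u v : 'rV[R]_n) : dot (a *: u) v = a * dot u v.
Proof. by rewrite !dotE mulr_sumr; apply: eq_bigr => j _; rewrite mxE mulrA. Qed.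

Lemma dotBl n (u w v : 'rV[R]_n) : dot (u - w) v = dot u v - dot w v.
Proof. by rewrite dotDl -scaleN1r dotZl mulN1r. Qed.

Lemma dotDr n (u w v : 'rV[R]_n) : dot v (u + w) = dot v u + dot v w.
Proof. by rewrite dotC dotDl !(dotC v). Qed.

Lemma dotZr n a (u v : 'rV[R]_n) : dot v (a *: u) = a * dot v u.
Proof. by rewrite dotC dotZl dotC. Qed.

Lemma dotBr n (u w v : 'rV[R]_n) : dot v (u - w) = dot v u - dot v w.
Proof. by rewrite dotC dotBl !(dotC v). Qed.

Lemma dot_mulmxl a b (x : 'rV[R]_a) (M : 'M[R]_(a, b)) (y : 'rV[R]_b) :
  dot (x *m M) y = dot x (y *m M^T).
Proof. by rewrite /dot trmx_mul trmxK mulmxA. Qed.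

Lemma mulmx_trE m p n (A : 'M[R]_(m, n)) (B : 'M[R]_(p, n)) i l :
  (A *m B^T) i l = dot (row i A) (row l B).
Proof. by rewrite !dotE mxE; apply: eq_bigr => j _; rewrite !mxE. Qed.

Lemma dot0r n (u : 'rV[R]_n) : dot u 0 = 0.
Proof. by rewrite dotE big1 // => j _; rewrite mxE mulr0. Qed.

Lemma dotvv_ge0 n (u : 'rV[R]_n) : 0 <= dot u u.
Proof. by rewrite dotE; apply: sumr_ge0 => j _; rewrite -expr2 sqr_ge0. Qed.

Lemma dotvv_eq0 n (u : 'rV[R]_n) : (dot u u == 0) = (u == 0).
Proof.
apply/idP/eqP => [|->]; last by rewrite dot0r.
rewrite dotE psumr_eq0 => [/allP u0|j _]; last by rewrite -expr2 sqr_ge0.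
apply/rowP => j; rewrite mxE; apply/eqP.
by have := u0 j (mem_index_enum _); rewrite mulf_eq0 orbb.
Qed.

Lemma dotvv_gt0 n (u : 'rV[R]_n) : u != 0 -> 0 < dot u u.
Proof. by rewrite lt_def dotvv_eq0 dotvv_ge0 andbT. Qed.

Lemma rnormE n (u : 'rV[R]_n) : rnorm u = Num.sqrt (dot u u).
Proof. by rewrite /rnorm dotE; congr Num.sqrt; apply: eq_bigr => j _; rewrite expr2. Qed.

Lemma rnorm_ge0 n (u : 'rV[R]_n) : 0 <= rnorm u.
Proof. by rewrite rnormE sqrtr_ge0. Qed.

Lemma rnorm_sqr n (u : 'rV[R]_n) : rnorm u ^+ 2 = dot u u.
Proof. by rewrite rnormE sqr_sqrtr // dotvv_ge0. Qed.

Lemma rnormZ n a (u : 'rV[R]_n) : rnorm (a *: u) = `|a| * rnorm u.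
Proof. by rewrite !rnormE dotZl dotZr mulrA -expr2 sqrtrM ?sqr_ge0 // sqrtr_sqr. Qed.

Lemma dot_residual n (u v : 'rV[R]_n) : v != 0 ->
  let w := u - (dot u v / dot v v) *: v in dot w w = dot u u - dot u v ^+ 2 / dot v v.
Proof.
move=> vn0 /=; have vv_neq0 : dot v v != 0 by rewrite dotvv_eq0.
by rewrite !dotBl !dotBr !dotZl !dotZr (dotC v u); field.
Qed.

Lemma dot_sqr_le n (u v : 'rV[R]_n) : dot u v ^+ 2 <= dot u u * dot v v.
Proof.
have [->|vn0] := eqVneq v 0; first by rewrite !dot0r expr0n mulr0.
have := dotvv_ge0 (u - (dot u v / dot v v) *: v).
by rewrite dot_residual // subr_ge0 ler_pdivrMr ?dotvv_gt0.
Qed.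

Lemma dot_le_rnorm n (u v : 'rV[R]_n) : dot u v <= rnorm u * rnorm v.
Proof.
have [uv_le0|uv_gt0] := leP (dot u v) 0.
  by apply: le_trans uv_le0 _; rewrite mulr_ge0 ?rnorm_ge0.
rewrite !rnormE -sqrtrM ?dotvv_ge0 // -(ger0_norm (ltW uv_gt0)) -sqrtr_sqr.
exact/ler_wsqrtr/dot_sqr_le.
Qed.

Lemma rnormD n (u v : 'rV[R]_n) : rnorm (u + v) <= rnorm u + rnorm v.
Proof.
rewrite -(ler_pXn2r (isT : (0 < 2)%N)) ?nnegrE ?addr_ge0 ?rnorm_ge0 //.
rewrite rnorm_sqr dotDl !dotDr sqrrD !rnorm_sqr (dotC v u).
have := dot_le_rnorm u v; lra.
Qed.

Lemma rnorm_sum n (I : finType) (F : I -> 'rV[R]_n) :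
  rnorm (\sum_i F i) <= \sum_i rnorm (F i).
Proof.
elim/big_ind2: _ => [|x1 x2 y1 y2 le1 le2|//]; first by rewrite rnormE dot0r sqrtr0.
by apply: le_trans (rnormD _ _) _; exact: lerD.
Qed.

Lemma proj_perpE n (v y : 'rV[R]_n) :
  proj_perp v y = if y == 0 then v else v - (dot v y / dot y y) *: y.
Proof. by []. Qed.

Lemma proj_perpD n (v w y : 'rV[R]_n) :
  proj_perp (v + w) y = proj_perp v y + proj_perp w y.
Proof.
rewrite !proj_perpE; case: eqP => _ //.
by rewrite dotDl mulrDl scalerDl opprD addrACA.
Qed.

Lemma proj_perpZ n a (v y : 'rV[R]_n) : proj_perp (a *: v) y = a *: proj_perp v y.
Proof.
rewrite !proj_perpE; case: eqP => _ //.
by rewrite dotZl -mulrA -scalerA scalerBr.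
Qed.

Lemma proj_perp_id n (y : 'rV[R]_n) : proj_perp y y = 0.
Proof.
rewrite proj_perpE; have [//|yn0] := eqVneq y 0.
by rewrite mulfV ?gt_eqF ?dotvv_gt0 // scale1r subrr.
Qed.

Lemma rnorm_proj_perp_le n (v y : 'rV[R]_n) : rnorm (proj_perp v y) <= rnorm v.
Proof.
rewrite proj_perpE; have [//|yn0] := eqVneq y 0.
rewrite !rnormE ler_wsqrtr // dot_residual // lerBlDr lerDl.
by rewrite divr_ge0 ?sqr_ge0 ?dotvv_ge0.
Qed.

End EuclideanRow.

Section SymmetricSpectrum.
Local Open Scope sesquilinear_scope.
Variable R : realType.

Local Notation toC := (real_complex R).

Lemma real_complex_real (x : R) : toC x \is Num.real.
Proof. by apply/complex_realP; exists x. Qed.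

Lemma trmx_complexify m n (M : 'M[R]_(m, n)) : (map_mx toC M)^T = (map_mx toC M)^t*.
Proof. by apply/matrixP => i j; rewrite !mxE conj_Creal // real_complex_real. Qed.

Lemma sym_complexify_herm n (A : 'M[R]_n) : A^T = A -> map_mx toC A \is hermsymmx.
Proof.
move=> Asym; apply/is_hermitianmxP; rewrite expr0 scale1r.
by rewrite -trmx_complexify map_trmx Asym.
Qed.

Lemma eigenvalue_complexify n (A : 'M[R]_n) (x : R) :
  eigenvalue (map_mx toC A) (toC x) -> eigenvalue A x.
Proof. by rewrite !eigenvalue_root_char -map_char_poly fmorph_root. Qed.

Lemma dot_complexify n p (y : 'rV[R]_n) (M : 'M[R]_(n, p)) (z : 'rV[R]_p) :
  toC (dot (y *m M) z) = (map_mx toC y *m map_mx toC M *m (map_mx toC z)^T) 0 0.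
Proof. by rewrite /dot map_trmx -!map_mxM [RHS]mxE. Qed.

(* Diagonalise the Hermitian complexification of [A] by a unitary matrix: its spectral diagonal is
   real, and its largest entry is an eigenvalue of [A] dominating the quadratic form. *)
Lemma sym_quadform_le_eigenvalue n (A : 'M[R]_n.+1) : A^T = A ->
  exists2 D, eigenvalue A D & forall y : 'rV[R]_n.+1, dot (y *m A) y <= D * dot y y.
Proof.
move=> Asym; pose Ac := map_mx toC A.
have Aherm : Ac \is hermsymmx := sym_complexify_herm Asym.
have /orthomx_spectralP Adec := hermitian_normalmx Aherm.
set P := spectralmx Ac in Adec; set d := spectral_diag Ac in Adec.
have Pu : P \is unitarymx := spectral_unitarymx Ac.
have PU : P \in unitmx := spectral_unit Ac.
have Pinv : invmx P = P^t* := invmx_unitary Pu.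
have dR j : d 0 j = toC (complex.Re (d 0 j)).
  by rewrite RRe_real // (mxOverP (hermitian_spectral_diag_real Aherm)).
pose i0 := [arg max_(i > ord0) complex.Re (d 0 i)]%O.
have i0_max j : complex.Re (d 0 j) <= complex.Re (d 0 i0).
  by rewrite /i0; case: Order.TotalTheory.arg_maxP => // i _; apply.
exists (complex.Re (d 0 i0)).
  apply/eigenvalue_complexify; rewrite -dR; apply/eigenvalueP; exists (row i0 P).
    rewrite -/Ac -row_mul Adec !mulmxA mulmxV // mul1mx row_mul row_diag_mx.
    by rewrite -scalemxAl -rowE.
  apply/eqP => Pi0; have := unitarymxP Pu => /(congr1 (row i0)).
  rewrite row_mul Pi0 mul0mx => /rowP/(_ i0); rewrite !mxE eqxx /= => /eqP.
  by rewrite eq_sym oner_eq0.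
move=> y; set yc := map_mx toC y; set w := yc *m P^t*.
have wT : w ^t* = P *m yc^t* by rewrite /w trmx_mul map_mxM trmxCK.
have yAy : yc *m Ac *m yc^T = w *m diag_mx d *m w^t*.
  by rewrite trmx_complexify wT Adec Pinv /w !mulmxA.
have yy : yc *m yc^T = w *m w^t*.
  by rewrite trmx_complexify wT /w !mulmxA -(mulmxA yc) -Pinv mulVmx // mulmx1.
rewrite -lecR dot_complexify rmorphM /= -[y in dot y](mulmx1 y) dot_complexify.
rewrite map_scalar_mx rmorph1 mulmx1 yAy yy mul_mx_diag mxE [X in _ <= _ * X]mxE mulr_sumr.
apply: ler_sum => j _; rewrite [X in X * _ <= _]mxE.
have -> : w^t* j 0 = (w 0 j)^* by rewrite !mxE.
rewrite mulrAC [X in _ <= X]mulrC ler_wpM2l ?mul_conjC_ge0 //.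
by rewrite dR lecR.
Qed.

End SymmetricSpectrum.

Section SingularValue.
Variable R : realType.

Lemma sigma_max_ge0 a b (W : 'M[R]_(a, b)) : 0 <= sigma_max W.
Proof. exact: sqrtr_ge0. Qed.

Lemma dot_rV0 (u v : 'rV[R]_0) : dot u v = 0.
Proof. by rewrite dotE big_ord0. Qed.

Lemma quadform_gram_le a b (W : 'M[R]_(a, b)) (y : 'rV[R]_b) :
  dot (y *m (W^T *m W)) y <= sigma_max W ^+ 2 * dot y y.
Proof.
case: b W y => [|b] W y; first by rewrite !dot_rV0 mulr0.
have [|D evD quad_le] := @sym_quadform_le_eigenvalue _ _ (W^T *m W).
  by rewrite trmx_mul trmxK.
have D_ge0 : 0 <= D.
  case/eigenvalueP: evD => v vA vn0.
  have : 0 <= dot (v *m (W^T *m W)) v by rewrite mulmxA dot_mulmxl dotvv_ge0.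
  by rewrite vA dotZl pmulr_lge0 // dotvv_gt0.
have D_le_sup : D <= sup [set x : R | eigenvalue (W^T *m W) x].
  apply: ub_le_sup => //; exists D => x /eigenvalueP [v vA vn0].
  by have := quad_le v; rewrite vA dotZl ler_pM2r // dotvv_gt0.
apply: le_trans (quad_le y) _; rewrite ler_wpM2r ?dotvv_ge0 //.
by rewrite sqr_sqrtr // (le_trans D_ge0).
Qed.

Lemma rnorm_mulmx_le a b (u : 'rV[R]_a) (W : 'M[R]_(a, b)) :
  rnorm (u *m W) <= sigma_max W * rnorm u.
Proof.
set y := u *m W.
rewrite -(ler_pXn2r (isT : (0 < 2)%N)) ?nnegrE ?mulr_ge0 ?rnorm_ge0 ?sigma_max_ge0 //.
have [y0|yn0] := eqVneq y 0.
  by rewrite y0 rnorm_sqr dot0r exprn_ge0 ?mulr_ge0 ?rnorm_ge0 ?sigma_max_ge0.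
have yy_gt0 := dotvv_gt0 yn0.
have yy_le : dot y y <= rnorm u * rnorm (y *m W^T).
  by rewrite {1}/y dot_mulmxl dot_le_rnorm.
have yWt_le : rnorm (y *m W^T) ^+ 2 <= sigma_max W ^+ 2 * dot y y.
  by rewrite rnorm_sqr dot_mulmxl trmxK -mulmxA dotC quadform_gram_le.
rewrite rnorm_sqr exprMn rnorm_sqr -(ler_pM2r yy_gt0).
have sq_le : dot y y ^+ 2 <= rnorm u ^+ 2 * rnorm (y *m W^T) ^+ 2.
  by rewrite -exprMn lerXn2r ?nnegrE ?dotvv_ge0 ?mulr_ge0 ?rnorm_ge0.
apply: le_trans (_ : rnorm u ^+ 2 * (sigma_max W ^+ 2 * dot y y) <= _).
  by rewrite -expr2; apply: le_trans sq_le _; rewrite ler_wpM2l ?exprn_ge0 ?rnorm_ge0.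
by rewrite rnorm_sqr; lra.
Qed.

End SingularValue.

Section Attention.
Variable R : realType.
Variables (din dout dkey : nat) (Wq Wk : 'M[R]_(din, dkey)) (Wv : 'M[R]_(din, dout)).

Definition attn_score N (X : 'M[R]_(N, din)) (i l : 'I_N) : R :=
  expR ((row i X *m Wq *m Wk^T *m (row l X)^T) 0 0 / Num.sqrt (dkey%:R)).

Lemma attn_score_gt0 N (X : 'M[R]_(N, din)) i l : 0 < attn_score X i l.
Proof. exact: expR_gt0. Qed.

Lemma attn_score_sum_gt0 N (X : 'M[R]_(N, din)) i : 0 < \sum_l attn_score X i l.
Proof.
rewrite (bigD1 i) //=; apply: ltr_pwDl; first exact: attn_score_gt0.
by apply: sumr_ge0 => l _; apply/ltW/attn_score_gt0.
Qed.

Lemma attn_scoreE N (X : 'M[R]_(N, din)) i l :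
  attn_score X i l = expR (dot (row i X *m Wq) (row l X *m Wk) / Num.sqrt (dkey%:R)).
Proof. by rewrite /attn_score /dot trmx_mul !mulmxA. Qed.

Lemma attn_row N (X : 'M[R]_(N, din)) i :
  row i (attn Wq Wk Wv X) =
  (\sum_l attn_score X i l)^-1 *: \sum_l attn_score X i l *: (row l X *m Wv).
Proof.
rewrite /attn; set E := map_mx expR _.
have EE i' l : E i' l = attn_score X i' l.
  by rewrite attn_scoreE -!row_mul -mulmx_trE /E !mxE mulrC.
set s := \row_(i' < N) \sum_(l < N) E i' l.
have s_gt0 j : 0 < s 0 j.
  by rewrite mxE (eq_bigr _ (fun l _ => EE j l)) attn_score_sum_gt0.
have inv_s : invmx (diag_mx s) = diag_mx (\row_j (s 0 j)^-1).
  have sVs : diag_mx (\row_j (s 0 j)^-1) *m diag_mx s = 1%:M.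
    rewrite mulmx_diag -diag_const_mx; congr diag_mx; apply/rowP => j.
    by move: (s_gt0 j); rewrite !mxE => sj_gt0; rewrite mulVf ?gt_eqF.
  have [_ s_unit] := mulmx1_unit sVs.
  by rewrite -[invmx _]mul1mx -sVs -mulmxA mulmxV // mulmx1.
rewrite inv_s -mulmxA row_mul row_diag_mx -scalemxAl -rowE row_mul mulmx_sum_row.
congr (_ *: _); first by rewrite mxE [s 0 i]mxE; congr (_^-1); apply: eq_bigr => l _.
by apply: eq_bigr => l _; rewrite mxE EE row_mul.
Qed.

Definition cross_score k m (U : 'M[R]_(k, din)) (X : 'M[R]_(m, din)) i j : R :=
  expR (dot (row i X *m Wq) (row j U *m Wk) / Num.sqrt (dkey%:R)).

Lemma attn_col_mx_row k m (U : 'M[R]_(k, din)) (X : 'M[R]_(m, din)) i :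
  let g := \sum_l attn_score X i l in
  let c := cross_score U X i in
  row i (dsubmx (attn Wq Wk Wv (col_mx U X))) =
  (\sum_j c j + g)^-1 *: (\sum_j c j *: (row j U *m Wv) + g *: row i (attn Wq Wk Wv X)).
Proof.
move=> g c.
have rowU j : row (lshift m j) (col_mx U X) = row j U by rewrite -row_usubmx col_mxKu.
have rowX l : row (rshift k l) (col_mx U X) = row l X by rewrite -row_dsubmx col_mxKd.
have g_gt0 : 0 < g := attn_score_sum_gt0 X i.
rewrite row_dsubmx !attn_row !big_split_ord /= scalerA mulfV ?gt_eqF // scale1r.
have cE j : attn_score (col_mx U X) (rshift k i) (lshift m j) = c j.
  by rewrite attn_scoreE rowU rowX.
have gE l : attn_score (col_mx U X) (rshift k i) (rshift k l) = attn_score X i l.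
  by rewrite !attn_scoreE !rowX.
congr (_^-1 *: (_ + _)); first congr (_ + _).
- by apply: eq_bigr => j _; rewrite cE.
- by apply: eq_bigr => l _; rewrite gE.
- by apply: eq_bigr => j _; rewrite cE rowU.
- by apply: eq_bigr => l _; rewrite gE rowX.
Qed.

End Attention.

Section Bounds.
Variable R : realType.

Lemma proj_perp_mixture_le n (A Ym Y : 'rV[R]_n) (S g : R) :
  0 <= S -> 0 < g -> Y = (S + g)^-1 *: (A + g *: Ym) ->
  g * rnorm (proj_perp Ym Y) <= rnorm A.
Proof.
move=> S_ge0 g_gt0 YE; apply: le_trans (rnorm_proj_perp_le A Y).
have /eqP := proj_perp_id Y; rewrite {1}YE proj_perpZ proj_perpD proj_perpZ.
rewrite scaler_eq0 invr_eq0 gt_eqF ?ltr_wpDl //= addr_eq0 => /eqP ->.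
by rewrite -scaleN1r !rnormZ normrN1 mul1r gtr0_norm.
Qed.

Lemma rnorm_sum_scale_le n k (e : 'I_k -> R) (v : 'I_k -> 'rV[R]_n) (E V : R) :
  (forall j, 0 <= e j <= E) -> (forall j, rnorm (v j) <= V) ->
  rnorm (\sum_j e j *: v j) <= k%:R * (E * V).
Proof.
move=> e_bnd v_bnd; apply: le_trans (rnorm_sum _) _.
apply: le_trans (_ : _ <= \sum_(j < k) E * V) _; last first.
  by rewrite sumr_const card_ord mulr_natl.
apply: ler_sum => j _.
have /andP[e_ge0 e_le] := e_bnd j.
by rewrite rnormZ ger0_norm // ler_pM ?rnorm_ge0.
Qed.

Lemma dot_mulmx_le a b (x u : 'rV[R]_a) (Wq Wk : 'M[R]_(a, b)) (Mx Mu : R) :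
  rnorm x <= Mx -> rnorm u <= Mu ->
  dot (x *m Wq) (u *m Wk) <= sigma_max Wq * sigma_max Wk * Mu * Mx.
Proof.
move=> x_le u_le; apply: le_trans (dot_le_rnorm _ _) _.
have sq_ge0 := sigma_max_ge0 Wq; have sk_ge0 := sigma_max_ge0 Wk.
have -> : sigma_max Wq * sigma_max Wk * Mu * Mx =
    (sigma_max Wq * Mx) * (sigma_max Wk * Mu) by ring.
apply: ler_pM; rewrite ?rnorm_ge0 //.
  by apply: le_trans (rnorm_mulmx_le _ _) _; rewrite ler_wpM2l.
by apply: le_trans (rnorm_mulmx_le _ _) _; rewrite ler_wpM2l.
Qed.

End Bounds.

Theorem theorem1 (R : realType) (din dout dkey k m : nat)
  (Hdin : (0 < din)%N) (Hdout : (0 < dout)%N) (Hdkey : (0 < dkey)%N)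
  (Hk : (0 < k)%N) (Hm : (0 < m)%N)
  (Wq Wk : 'M[R]_(din, dkey)) (Wv : 'M[R]_(din, dout))
  (X0 : 'M[R]_(m, din)) (Mu : R) (HMu : 0 < Mu) (Ystar : 'M[R]_(m, dout)) :
  let Mx := \big[Num.max/0]_(j < m) rnorm (row j X0) in
  let alpha := sigma_max Wq * sigma_max Wk * Mu * Mx / Num.sqrt (dkey%:R) in
  let g := fun i : 'I_m => \sum_(j < m)
      expR ((row i X0 *m Wq *m Wk^T *m (row j X0)^T) 0 0 / Num.sqrt (dkey%:R)) in
  let gamma := fun i : 'I_m => expR alpha / g i * sigma_max Wv * Mu in
  let Ymax := attn Wq Wk Wv X0 in
  (exists i : 'I_m, rnorm (proj_perp (row i Ymax) (row i Ystar)) > k%:R * gamma i) ->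
  forall U : 'M[R]_(k, din), (forall j : 'I_k, rnorm (row j U) <= Mu) ->
    dsubmx (attn Wq Wk Wv (col_mx U X0)) <> Ystar.
Proof.
move=> Mx alpha g gamma Ymax [i proj_gt] U U_le reach.
have g_gt0 : 0 < g i := attn_score_sum_gt0 Wq Wk X0 i.
have sqrt_gt0 : 0 < Num.sqrt (dkey%:R : R) by rewrite sqrtr_gt0 ltr0n.
have c_le j : 0 <= cross_score Wq Wk U X0 i j <= expR alpha.
  rewrite ltW ?expR_gt0 //= ler_expR ler_pM2r ?invr_gt0 //.
  exact: dot_mulmx_le (le_bigmax _ _ _) (U_le j).
have v_le j : rnorm (row j U *m Wv) <= sigma_max Wv * Mu.
  by apply: le_trans (rnorm_mulmx_le _ _) _; rewrite ler_wpM2l ?sigma_max_ge0.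
have := proj_perp_mixture_le _ _ (attn_col_mx_row Wq Wk Wv U X0 i).
rewrite reach => /(_ (sumr_ge0 _ (fun j _ => ltW (expR_gt0 _))) g_gt0).
move=> /le_trans /(_ (rnorm_sum_scale_le c_le v_le)).
have -> : k%:R * (expR alpha * (sigma_max Wv * Mu)) = g i * (k%:R * gamma i).
  by rewrite /gamma; field; rewrite gt_eqF.
by rewrite ler_pM2l // leNgt proj_gt.
Qed.
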